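(* Consider the quadratic Klein–Gordon equation $$\partial_t^2u-\partial_x^2u+mu=Q_{00}(u_t,u_t)+Q_{01}(u_t,u)+Q_{11}(u,u),$$ where $Q_{00},Q_{01},Q_{11}$ are translation-invariant bilinear forms with symbols $q_{00}\in\mathrm{span}\{1,\,i(\xi_1+\xi_2)\}$, $q_{01}\in\mathrm{span}\{1,i\xi_1,i\xi_2,\xi_1\xi_2,\xi_2^2\}$, $q_{11}\in\mathrm{span}\{1,\,i(\xi_1+\xi_2),\,\xi_1\xi_2,\,\xi_1^2+\xi_2^2,\,i(\xi_1^2\xi_2+\xi_1\xi_2^2)\}$, with $q_{00},q_{11}$ symmetric in $(\xi_1,\xi_2)$, all mapping real-valued functions to real-valued functions. Then there exists a unique normal form transformation $$\mathbf u=u+A(u,u)+B(u_t,u_t)+C(u_t,u),$$ with $A,B,C$ translation-invariant bilinear forms mapping real functions to real functions (with $A$, $B$ having symmetric symbols), such that $$-\Lambda_2\big(L_{KG}(A(u,u)+B(u_t,u_t)+C(u_t,u))\big)=Q_{00}(u_t,u_t)+Q_{01}(u_t,u)+Q_{11}(u,u).$$ Moreover, with $a,b,c$ the symbols of $A,B,C$: (i) In the low–high region $|\xi_1|\le c_0|\xi_2|$ (for a fixed small $c_0>0$) one has $a(\xi_1,\xi_2)=a_0(\xi_1)\xi_2+a_1(\xi_1)+O((1+|\xi_1|^4)\xi_2^{-1})$ with $a_0\in S^2$, $a_1\in S^3$; $b(\xi_1,\xi_2)=b_0(\xi_1)+b_1(\xi_1)\xi_2^{-1}+O((1+|\xi_1|^3)\xi_2^{-2})$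 with $b_0\in S^1$, $b_1\in S^2$; $c(\xi_1,\xi_2)=c^1_0(\xi_1)\xi_2+c^1_1(\xi_1)+O((1+|\xi_1|^3)\xi_2^{-1})$ with $c^1_0\in S^1$, $c^1_1\in S^2$; and in the high–low region $|\xi_2|\le c_0|\xi_1|$, $c(\xi_1,\xi_2)=c^2_0(\xi_2)+c^2_1(\xi_2)\xi_1^{-1}+O((1+|\xi_2|^4)\xi_1^{-2})$ with $c^2_0\in S^2$, $c^2_1\in S^3$. (ii) For the high–high parts $a_{hh}=\chi_{hh}a$, $b_{hh}=\chi_{hh}b$, $c_{hh}=\chi_{hh}c$ there are decompositions $a_{hh}=(\xi_1+\xi_2)\tilde a_{hh}+a^{(0)}_{hh}$, $b_{hh}=(\xi_1+\xi_2)\tilde b_{hh}+b^{(0)}_{hh}$, $c_{hh}=(\xi_1+\xi_2)\tilde c_{hh}+c^{(0)}_{hh}$ with $\tilde a_{hh},a^{(0)}_{hh}\in S^2$, $\tilde b_{hh},b^{(0)}_{hh}\in S^0$, $\tilde c_{hh},c^{(0)}_{hh}\in S^1$.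
   Context: $m>0$, $L_{KG}:=\partial_t^2-\partial_x^2+m$. A translation-invariant bilinear form $B$ with symbol $b(\eta,\xi)$ acts by $\widehat{B(f,g)}(\zeta)=\int_{\xi+\eta=\zeta}b(\eta,\xi)\hat f(\eta)\hat g(\xi)\,d\xi$ (so $\xi_1$ is the frequency of the first argument, $\xi_2$ of the second). It maps real functions to real functions iff $b(-\xi_1,-\xi_2)=\overline{b(\xi_1,\xi_2)}$. $\Lambda_2$ keeps only the terms that are exactly quadratic in $u$ after all second time derivatives $u_{tt}$ (and those of $u_t$) are eliminated using the equation; equivalently, the identity holds for all solutions of the linear equation $L_{KG}u=0$. One-variable class $S^n$: $|\partial^k_\xi a(\xi)|\lesssim_k\langle\xi\rangle^{n-k}$. Bilinear class $S^n$: $|\partial^{\alpha_1}_{\xi_1}\partial^{\alpha_2}_{\xi_2}m(\xi_1,\xi_2)|\lesssim_\alpha\langle\xi\rangle^{n-|\alpha|}$, $\xi=(\xi_1,\xi_2)$. $\chi_{hh}(\xi_1,\xi_2)$ is a smooth nonnegative cutoff (smooth on the dyadic scale) equal to $1$ when $\frac1{10}\le\langle\xi_1\rangle/\langle\xi_2\rangle\le10$ and $0$ when $\langle\xi_1\rangle\le\frac1{20}\langle\xi_2\rangle$ or $\langle\xi_2\rangle\le\frac1{20}\langle\xi_1\rangle$. *)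

From Stdlib Require Import Reals.
From Coquelicot Require Import Coquelicot.
Open Scope R_scope.

(** A symbol of a translation-invariant bilinear form:
    hat(B(f,g))(zeta) = int_{xi1+xi2=zeta} b(xi1,xi2) fhat(xi1) ghat(xi2). *)
Definition symbol := R -> R -> C.

Definition RC (x : R) : C := RtoC x.

(** B maps real functions to real functions: b(-xi1,-xi2) = conj b(xi1,xi2). *)
Definition real_symbol (b : symbol) : Prop :=
  forall x y, b (- x) (- y) = Cconj (b x y).

Definition symmetric_symbol (b : symbol) : Prop :=
  forall x y, b x y = b y x.

Definition in_span_q00 (q : symbol) : Prop :=
  exists k1 k2 : C, forall x y,
    q x y = (k1 + k2 * (Ci * RC (x + y)))%C.

Definition in_span_q01 (q : symbol) : Prop :=
  exists k1 k2 k3 k4 k5 : C, forall x y,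
    q x y = (k1 + k2 * (Ci * RC x) + k3 * (Ci * RC y)
             + k4 * RC (x * y) + k5 * RC (y ^ 2))%C.

Definition in_span_q11 (q : symbol) : Prop :=
  exists k1 k2 k3 k4 k5 : C, forall x y,
    q x y = (k1 + k2 * (Ci * RC (x + y)) + k3 * RC (x * y)
             + k4 * RC (x ^ 2 + y ^ 2) + k5 * (Ci * RC (x ^ 2 * y + x * y ^ 2)))%C.

(** A quadratic expression
      P_uu(u,u) + P_ut(u,u_t) + P_tu(u_t,u) + P_tt(u_t,u_t)
    is represented by its four symbols (first symbol variable = frequency of
    the first argument). *)
Record qexpr := QE { q_uu : symbol; q_ut : symbol; q_tu : symbol; q_tt : symbol }.

Definition qmap2 (op : C -> C -> C) (E F : qexpr) : qexpr :=
  QE (fun x y => op (q_uu E x y) (q_uu F x y))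
     (fun x y => op (q_ut E x y) (q_ut F x y))
     (fun x y => op (q_tu E x y) (q_tu F x y))
     (fun x y => op (q_tt E x y) (q_tt F x y)).

Definition qadd := qmap2 Cplus.
Definition qsub := qmap2 Cminus.

Definition qmul (s : symbol) (E : qexpr) : qexpr :=
  QE (fun x y => (s x y * q_uu E x y)%C)
     (fun x y => (s x y * q_ut E x y)%C)
     (fun x y => (s x y * q_tu E x y)%C)
     (fun x y => (s x y * q_tt E x y)%C).

(** Fourier multiplier of the linear KG operator: u_tt = -(xi^2+m) u. *)
Definition w (m x : R) : C := RC (x ^ 2 + m).

Definition qdx (E : qexpr) : qexpr := qmul (fun x y => (Ci * RC (x + y))%C) E.

(** d/dt of a quadratic expression, by the Leibniz rule, where the second
    time derivative of u is eliminated using the linear equation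
    L_KG u = 0, i.e. (u_t)_t = u_tt = -(m - d_x^2) u.  Hence the result is
    again exactly quadratic in (u,u_t): this is the Lambda_2 projection. *)
Definition qdt (m : R) (E : qexpr) : qexpr :=
  QE (fun x y => (- (w m y * q_ut E x y) - w m x * q_tu E x y)%C)
     (fun x y => (q_uu E x y - w m x * q_tt E x y)%C)
     (fun x y => (q_uu E x y - w m y * q_tt E x y)%C)
     (fun x y => (q_ut E x y + q_tu E x y)%C).

Definition Lambda2_LKG (m : R) (E : qexpr) : qexpr :=
  qadd (qsub (qdt m (qdt m E)) (qdx (qdx E)))
       (qmul (fun _ _ => RC m) E).

Definition qopp (E : qexpr) : qexpr := qmul (fun _ _ => RC (-1)) E.

(** Equality of two quadratic expressions as functionals of arbitrary
    (independent) data (u, u_t): symmetrized uu and u_t u_t symbols agree,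
    and the total mixed symbol (written in the order (u_t,u)) agrees. *)
Definition qequiv (E F : qexpr) : Prop :=
  forall x y,
    (q_uu E x y + q_uu E y x = q_uu F x y + q_uu F y x)%C /\
    (q_tt E x y + q_tt E y x = q_tt F x y + q_tt F y x)%C /\
    (q_tu E x y + q_ut E y x = q_tu F x y + q_ut F y x)%C.

Definition zero_symbol : symbol := fun _ _ => RC 0.

Definition nf_corr (a b c : symbol) : qexpr := QE a zero_symbol c b.

Definition nonlin (q00 q01 q11 : symbol) : qexpr := QE q11 zero_symbol q01 q00.

Definition nf_admissible (a b c : symbol) : Prop :=
  real_symbol a /\ real_symbol b /\ real_symbol c /\
  symmetric_symbol a /\ symmetric_symbol b.

Definition nf_equation (m : R) (q00 q01 q11 a b c : symbol) : Prop :=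
  qequiv (qopp (Lambda2_LKG m (nf_corr a b c))) (nonlin q00 q01 q11).

Definition jb (x : R) : R := sqrt (1 + x ^ 2).
Definition jb2 (x y : R) : R := sqrt (1 + x ^ 2 + y ^ 2).

Definition S1R (n : R) (f : R -> R) : Prop :=
  (forall k x, ex_derive_n f k x) /\
  forall k : nat, exists K : R, forall x,
    Rabs (Derive_n f k x) <= K * Rpower (jb x) (n - INR k).

Definition S1 (n : R) (f : R -> C) : Prop :=
  S1R n (fun x => Re (f x)) /\ S1R n (fun x => Im (f x)).

Definition pd (f : R -> R -> R) (a1 a2 : nat) (x y : R) : R :=
  Derive_n (fun s => Derive_n (fun t => f s t) a2 y) a1 x.

Definition S2R (n : R) (f : R -> R -> R) : Prop :=
  (forall (a1 a2 : nat) x y,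
      ex_derive_n (fun t => f x t) a2 y /\
      ex_derive_n (fun s => Derive_n (fun t => f s t) a2 y) a1 x) /\
  forall a1 a2 : nat, exists K : R, forall x y,
    Rabs (pd f a1 a2 x y) <= K * Rpower (jb2 x y) (n - INR (a1 + a2)).

Definition S2 (n : R) (f : symbol) : Prop :=
  S2R n (fun x y => Re (f x y)) /\ S2R n (fun x y => Im (f x y)).

Definition hh_cutoff (chi : R -> R -> R) : Prop :=
  S2R 0 chi /\
  (forall x y, 0 <= chi x y) /\
  (forall x y, / 10 <= jb x / jb y <= 10 -> chi x y = 1) /\
  (forall x y, (jb x <= / 20 * jb y \/ jb y <= / 20 * jb x) -> chi x y = 0).

Definition hh_decomp (n : R) (chi : R -> R -> R) (s : symbol) : Prop :=
  exists st s0 : symbol, S2 n st /\ S2 n s0 /\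
    forall x y, (RC (chi x y) * s x y = RC (x + y) * st x y + s0 x y)%C.

(* Eliminating u_tt, the equation becomes, at each frequency pair (x, y) = (xi1, xi2),
   a linear system for a, b and c (coupling c(x, y) with c(y, x)) whose determinant
   sigma^2 - 4 (x^2 + m) (y^2 + m), with sigma = 2 x y - m, equals - m * denom where
   denom = 4 (x^2 + x y + y^2) + 3 m is comparable to 1 + x^2 + y^2.  Hence a, b, c are
   unique and, for the prescribed spans, are polynomials of degrees 5, 3, 4 divided by
   m * denom.  Their symbol estimates are certified syntactically: expressions in x, y,
   1/denom and derivatives of chi are differentiated symbolically and assigned an order.
   The low-high expansions come from dividing the numerator, a cubic in the large
   frequency, by denom; the high-high decompositions from the fact that the top-order
   part of each numerator is divisible by x + y. *)

From Stdlib Require Import Reals Lra Lia ZArith List FunctionalExtensionality.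
From Coquelicot Require Import Coquelicot.
Import ListNotations.
Open Scope R_scope.

Definition denom (m x y : R) : R := 4 * (x ^ 2 + x * y + y ^ 2) + 3 * m.

Lemma denom_lower_bound m x y :
  0 < m -> Rmin 2 (3 * m) * (1 + x ^ 2 + y ^ 2) <= denom m x y.
Proof.
  intros Hm. pose proof (Rmin_l 2 (3 * m)). pose proof (Rmin_r 2 (3 * m)).
  assert (Hc : 0 < Rmin 2 (3 * m)) by (apply Rmin_glb_lt; lra).
  pose proof (pow2_ge_0 (x + y)). pose proof (pow2_ge_0 x). pose proof (pow2_ge_0 y).
  unfold denom. nra.
Qed.

Lemma denom_pos m x y : 0 < m -> 0 < denom m x y.
Proof.
  intros Hm. pose proof (denom_lower_bound m x y Hm).
  assert (0 < Rmin 2 (3 * m)) by (apply Rmin_glb_lt; lra).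
  pose proof (pow2_ge_0 x). pose proof (pow2_ge_0 y). nra.
Qed.

Lemma denom_sym m x y : denom m y x = denom m x y.
Proof. unfold denom. ring. Qed.

(** * Symbolic calculus for real symbols *)

Inductive rexpr :=
  | EC (c : R) | EX | EY | EInvDenom | EChi (i j : nat)
  | EAdd (a b : rexpr) | EMul (a b : rexpr).

Fixpoint eval (m : R) (chi : R -> R -> R) (e : rexpr) (x y : R) : R :=
  match e with
  | EC c => c
  | EX => x
  | EY => y
  | EInvDenom => / denom m x y
  | EChi i j => pd chi i j x y
  | EAdd a b => eval m chi a x y + eval m chi b x y
  | EMul a b => eval m chi a x y * eval m chi b x y
  end.

Fixpoint dx (e : rexpr) : rexpr :=
  match e with
  | EC _ | EY => EC 0
  | EX => EC 1
  | EInvDenom =>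
      EMul (EMul (EC (-1)) (EAdd (EMul (EC 8) EX) (EMul (EC 4) EY)))
           (EMul EInvDenom EInvDenom)
  | EChi i j => EChi (S i) j
  | EAdd a b => EAdd (dx a) (dx b)
  | EMul a b => EAdd (EMul (dx a) b) (EMul a (dx b))
  end.

Fixpoint dy (e : rexpr) : rexpr :=
  match e with
  | EC _ | EX => EC 0
  | EY => EC 1
  | EInvDenom =>
      EMul (EMul (EC (-1)) (EAdd (EMul (EC 4) EX) (EMul (EC 8) EY)))
           (EMul EInvDenom EInvDenom)
  | EChi i j => EChi i (S j)
  | EAdd a b => EAdd (dy a) (dy b)
  | EMul a b => EAdd (EMul (dy a) b) (EMul a (dy b))
  end.

(* [pd chi i j] differentiates in y first, so [dy] is only correct on
   expressions in which chi has not been differentiated in x yet. *)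
Fixpoint no_chi_dx (e : rexpr) : Prop :=
  match e with
  | EChi i _ => i = 0%nat
  | EAdd a b | EMul a b => no_chi_dx a /\ no_chi_dx b
  | _ => True
  end.

Lemma no_chi_dx_dy e : no_chi_dx e -> no_chi_dx (dy e).
Proof. induction e; simpl; tauto. Qed.

Lemma no_chi_dx_iter_dy n e : no_chi_dx e -> no_chi_dx (Nat.iter n dy e).
Proof. induction n; simpl; auto using no_chi_dx_dy. Qed.

Section Derivatives.

Variables (m : R) (chi : R -> R -> R).
Hypothesis Hm : 0 < m.
Hypothesis Hchi : forall (a1 a2 : nat) x y,
  ex_derive_n (fun t => chi x t) a2 y /\
  ex_derive_n (fun s => Derive_n (fun t => chi s t) a2 y) a1 x.

Lemma is_derive_dx e x y :
  is_derive (fun s => eval m chi e s y) x (eval m chi (dx e) x y).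
Proof.
  induction e; simpl.
  - auto_derive; auto; ring.
  - auto_derive; auto; ring.
  - auto_derive; auto; ring.
  - pose proof (denom_pos m x y Hm). unfold denom in *.
    auto_derive; [lra | field; lra].
  - apply Derive_correct, (proj2 (Hchi (S i) j x y)).
  - exact (is_derive_plus _ _ _ _ _ IHe1 IHe2).
  - exact (is_derive_mult _ _ _ _ _ IHe1 IHe2 Rmult_comm).
Qed.

Lemma is_derive_dy e x y : no_chi_dx e ->
  is_derive (fun t => eval m chi e x t) y (eval m chi (dy e) x y).
Proof.
  induction e; simpl; intros He.
  - auto_derive; auto; ring.
  - auto_derive; auto; ring.
  - auto_derive; auto; ring.
  - pose proof (denom_pos m x y Hm). unfold denom in *.
    auto_derive; [lra | field; lra].
  - subst i. apply Derive_correct, (proj1 (Hchi 0%nat (S j) x y)).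
  - exact (is_derive_plus _ _ _ _ _ (IHe1 (proj1 He)) (IHe2 (proj2 He))).
  - exact (is_derive_mult _ _ _ _ _ (IHe1 (proj1 He)) (IHe2 (proj2 He)) Rmult_comm).
Qed.

Lemma Derive_n_dx e n x y :
  Derive_n (fun s => eval m chi e s y) n x = eval m chi (Nat.iter n dx e) x y.
Proof.
  revert x; induction n; intros x; simpl; [reflexivity|].
  rewrite (Derive_ext _ (fun s => eval m chi (Nat.iter n dx e) s y)) by auto.
  apply is_derive_unique, is_derive_dx.
Qed.

Lemma Derive_n_dy e n x y : no_chi_dx e ->
  Derive_n (fun t => eval m chi e x t) n y = eval m chi (Nat.iter n dy e) x y.
Proof.
  intros He; revert y; induction n; intros y; simpl; [reflexivity|].
  rewrite (Derive_ext _ (fun t => eval m chi (Nat.iter n dy e) x t)) by auto.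
  apply is_derive_unique, is_derive_dy, no_chi_dx_iter_dy, He.
Qed.

Lemma ex_derive_n_dx e n x y : ex_derive_n (fun s => eval m chi e s y) n x.
Proof.
  destruct n; simpl; [exact I|].
  apply (ex_derive_ext (fun s => eval m chi (Nat.iter n dx e) s y)).
  - intros; symmetry; apply Derive_n_dx.
  - eexists; apply is_derive_dx.
Qed.

Lemma ex_derive_n_dy e n x y : no_chi_dx e ->
  ex_derive_n (fun t => eval m chi e x t) n y.
Proof.
  intros He; destruct n; simpl; [exact I|].
  apply (ex_derive_ext (fun t => eval m chi (Nat.iter n dy e) x t)).
  - intros; symmetry; apply Derive_n_dy, He.
  - eexists; apply is_derive_dy, no_chi_dx_iter_dy, He.
Qed.

Lemma pd_eval e a1 a2 x y : no_chi_dx e ->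
  pd (eval m chi e) a1 a2 x y = eval m chi (Nat.iter a1 dx (Nat.iter a2 dy e)) x y.
Proof.
  intros He; unfold pd.
  rewrite (Derive_n_ext _ (fun s => eval m chi (Nat.iter a2 dy e) s y)).
  - apply Derive_n_dx.
  - intros; apply Derive_n_dy, He.
Qed.

End Derivatives.

(* A syntactic certificate that [eval m chi e] has order d; the constant 0 has every order. *)
Fixpoint deg_le (e : rexpr) (d : R) : Prop :=
  match e with
  | EC c => c = 0 \/ 0 <= d
  | EX | EY => 1 <= d
  | EInvDenom => -2 <= d
  | EChi i j => - INR (i + j) <= d
  | EAdd a b => deg_le a d /\ deg_le b d
  | EMul a b => exists d1 d2, deg_le a d1 /\ deg_le b d2 /\ d1 + d2 <= d
  end.

Lemma deg_le_mono e d d' : deg_le e d -> d <= d' -> deg_le e d'.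
Proof.
  revert d d'; induction e; simpl; intros d d' H Hd; try lra.
  - split; [apply IHe1 with d | apply IHe2 with d]; tauto.
  - destruct H as (d1 & d2 & H1 & H2 & H3). exists d1, d2. repeat split; auto; lra.
Qed.

Lemma deg_le_derivatives e d :
  deg_le e d -> deg_le (dx e) (d - 1) /\ deg_le (dy e) (d - 1).
Proof.
  revert d; induction e; intros d H; cbn [deg_le dx dy] in *.
  - split; left; reflexivity.
  - split; [right | left]; lra.
  - split; [left | right]; lra.
  - assert (Hlin : forall a b : R, exists d1 d2,
      deg_le (EMul (EC (-1)) (EAdd (EMul (EC a) EX) (EMul (EC b) EY))) d1 /\
      deg_le (EMul EInvDenom EInvDenom) d2 /\ d1 + d2 <= d - 1).
    { intros a b. exists (d + 3), (-4); simpl.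
      split; [exists 0, (d + 3); split; [lra|]; split; [|lra]; split; exists 0, (d + 3); lra|].
      split; [exists (-2), (-2)|]; lra. }
    split; apply Hlin.
  - rewrite Nat.add_succ_l, Nat.add_succ_r, S_INR. split; lra.
  - destruct (IHe1 d (proj1 H)), (IHe2 d (proj2 H)). split; split; assumption.
  - destruct H as (d1 & d2 & H1 & H2 & H3).
    destruct (IHe1 d1 H1), (IHe2 d2 H2).
    split; split;
      [exists (d1 - 1), d2 | exists d1, (d2 - 1) | exists (d1 - 1), d2 | exists d1, (d2 - 1)];
      repeat split; auto; lra.
Qed.

Lemma deg_le_iter (D : rexpr -> rexpr) :
  (forall e d, deg_le e d -> deg_le (D e) (d - 1)) ->
  forall n e d, deg_le e d -> deg_le (Nat.iter n D e) (d - INR n).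
Proof.
  intros HD n e d He. induction n; simpl Nat.iter.
  - replace (d - INR 0) with d by (simpl; ring). exact He.
  - replace (d - INR (S n)) with (d - INR n - 1) by (rewrite S_INR; ring). auto.
Qed.

Lemma deg_le_pd e d a1 a2 :
  deg_le e d -> deg_le (Nat.iter a1 dx (Nat.iter a2 dy e)) (d - INR (a1 + a2)).
Proof.
  intros He. rewrite plus_INR.
  replace (d - (INR a1 + INR a2)) with (d - INR a2 - INR a1) by ring.
  apply deg_le_iter; [intros; apply deg_le_derivatives; auto|].
  apply deg_le_iter; [intros; apply deg_le_derivatives; auto|]. exact He.
Qed.

Lemma jb2_sq x y : jb2 x y ^ 2 = 1 + x ^ 2 + y ^ 2.
Proof. unfold jb2. rewrite pow2_sqrt; [ring | nra]. Qed.

Lemma jb2_ge_1 x y : 1 <= jb2 x y.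
Proof.
  unfold jb2. rewrite <- sqrt_1 at 1. apply sqrt_le_1_alt. nra.
Qed.

Lemma jb2_pos x y : 0 < jb2 x y.
Proof. pose proof (jb2_ge_1 x y). lra. Qed.

Lemma Rabs_le_jb2 x y : Rabs x <= jb2 x y /\ Rabs y <= jb2 x y.
Proof.
  pose proof (jb2_sq x y). pose proof (jb2_pos x y).
  rewrite <- (Rabs_pos_eq (jb2 x y)) by lra.
  split; apply Rsqr_le_abs_0; unfold Rsqr; nra.
Qed.

Lemma jb2_0 x : jb2 x 0 = jb x.
Proof. unfold jb2, jb. f_equal. ring. Qed.

Definition order_bound (f : R -> R -> R) (d : R) : Prop :=
  exists K, 0 <= K /\ forall x y, Rabs (f x y) <= K * Rpower (jb2 x y) d.

Lemma order_bound_mono f d d' : order_bound f d -> d <= d' -> order_bound f d'.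
Proof.
  intros (K & HK & H) Hd. exists K. split; auto. intros x y.
  eapply Rle_trans; [apply H|]. apply Rmult_le_compat_l; auto.
  apply Rle_Rpower; auto using jb2_ge_1.
Qed.

Lemma order_bound_inv_denom m : 0 < m -> order_bound (fun x y => / denom m x y) (-2).
Proof.
  intros Hm. assert (Hc : 0 < Rmin 2 (3 * m)) by (apply Rmin_glb_lt; lra).
  exists (/ Rmin 2 (3 * m)). split; [left; apply Rinv_0_lt_compat; auto|]. intros x y.
  pose proof (denom_pos m x y Hm). pose proof (denom_lower_bound m x y Hm).
  rewrite Rabs_pos_eq by (left; apply Rinv_0_lt_compat; auto).
  replace (-2) with (- INR 2) by (simpl; ring).
  rewrite Rpower_Ropp, Rpower_pow, jb2_sq by apply jb2_pos.
  rewrite <- Rinv_mult. apply Rinv_le_contravar; [|lra].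
  apply Rmult_lt_0_compat; nra.
Qed.

Section Bounds.

Variables (m : R) (chi : R -> R -> R).
Hypothesis Hm : 0 < m.
Hypothesis Hchi : S2R 0 chi.

Lemma order_bound_eval e d : deg_le e d -> order_bound (eval m chi e) d.
Proof.
  revert d; induction e; simpl; intros d H.
  - exists (Rabs c). split; [apply Rabs_pos|]. intros x y. destruct H as [-> | H].
    + rewrite Rabs_R0. lra.
    + rewrite <- (Rmult_1_r (Rabs c)) at 1. apply Rmult_le_compat_l; [apply Rabs_pos|].
      rewrite <- (Rpower_O (jb2 x y)) by apply jb2_pos.
      apply Rle_Rpower; auto using jb2_ge_1.
  - apply order_bound_mono with 1; auto. exists 1. split; [lra|]. intros x y.
    rewrite Rpower_1 by apply jb2_pos. rewrite Rmult_1_l. apply Rabs_le_jb2.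
  - apply order_bound_mono with 1; auto. exists 1. split; [lra|]. intros x y.
    rewrite Rpower_1 by apply jb2_pos. rewrite Rmult_1_l. apply Rabs_le_jb2.
  - apply order_bound_mono with (-2); auto. apply order_bound_inv_denom, Hm.
  - apply order_bound_mono with (- INR (i + j)); auto.
    destruct (proj2 Hchi i j) as [K HK]. exists (Rabs K). split; [apply Rabs_pos|].
    intros x y. eapply Rle_trans; [apply HK|]. rewrite Rminus_0_l.
    apply Rmult_le_compat_r; [left; apply exp_pos | apply RRle_abs].
  - destruct (IHe1 d (proj1 H)) as (K1 & HK1 & H1).
    destruct (IHe2 d (proj2 H)) as (K2 & HK2 & H2).
    exists (K1 + K2). split; [lra|]. intros x y.
    eapply Rle_trans; [apply Rabs_triang|].
    specialize (H1 x y). specialize (H2 x y). lra.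
  - destruct H as (d1 & d2 & Hd1 & Hd2 & Hd).
    destruct (IHe1 d1 Hd1) as (K1 & HK1 & H1).
    destruct (IHe2 d2 Hd2) as (K2 & HK2 & H2).
    apply order_bound_mono with (d1 + d2); auto.
    exists (K1 * K2). split; [apply Rmult_le_pos; auto|]. intros x y.
    rewrite Rabs_mult, Rpower_plus.
    replace (K1 * K2 * (Rpower (jb2 x y) d1 * Rpower (jb2 x y) d2))
      with ((K1 * Rpower (jb2 x y) d1) * (K2 * Rpower (jb2 x y) d2)) by ring.
    apply Rmult_le_compat; auto using Rabs_pos.
Qed.

Lemma S2R_eval e n : no_chi_dx e -> deg_le e n -> S2R n (eval m chi e).
Proof.
  intros He Hd. split.
  - intros a1 a2 x y. split.
    + apply ex_derive_n_dy; auto. apply (proj1 Hchi).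
    + apply (ex_derive_n_ext (fun s => eval m chi (Nat.iter a2 dy e) s y)).
      * intros; symmetry; apply Derive_n_dy; auto. apply (proj1 Hchi).
      * apply ex_derive_n_dx; auto. apply (proj1 Hchi).
  - intros a1 a2.
    destruct (order_bound_eval _ _ (deg_le_pd e n a1 a2 Hd)) as (K & _ & H).
    exists K. intros x y. rewrite pd_eval; auto. apply (proj1 Hchi).
Qed.

Lemma S1R_eval e n : deg_le e n -> S1R n (fun x => eval m chi e x 0).
Proof.
  intros Hd. split.
  - intros k x. apply ex_derive_n_dx; auto. apply (proj1 Hchi).
  - intros k.
    assert (Hdx : forall e d, deg_le e d -> deg_le (dx e) (d - 1))
      by (intros; apply deg_le_derivatives; assumption).
    destruct (order_bound_eval _ _ (deg_le_iter dx Hdx k e n Hd)) as (K & _ & H).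
    exists K. intros x. rewrite Derive_n_dx; auto; [|apply (proj1 Hchi)].
    rewrite <- jb2_0. apply H.
Qed.

End Bounds.

Inductive cexpr :=
  | CC (c : C) | CX | CY | CInvDenom | CChi
  | CAdd (a b : cexpr) | CMul (a b : cexpr).

Fixpoint ceval (m : R) (chi : R -> R -> R) (e : cexpr) (x y : R) : C :=
  match e with
  | CC c => c
  | CX => x
  | CY => y
  | CInvDenom => RtoC (/ denom m x y)
  | CChi => chi x y
  | CAdd a b => (ceval m chi a x y + ceval m chi b x y)%C
  | CMul a b => (ceval m chi a x y * ceval m chi b x y)%C
  end.

Fixpoint re_im (e : cexpr) : rexpr * rexpr :=
  match e with
  | CC c => (EC (Re c), EC (Im c))
  | CX => (EX, EC 0)
  | CY => (EY, EC 0)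
  | CInvDenom => (EInvDenom, EC 0)
  | CChi => (EChi 0 0, EC 0)
  | CAdd a b => (EAdd (fst (re_im a)) (fst (re_im b)), EAdd (snd (re_im a)) (snd (re_im b)))
  | CMul a b =>
      (EAdd (EMul (fst (re_im a)) (fst (re_im b)))
            (EMul (EC (-1)) (EMul (snd (re_im a)) (snd (re_im b)))),
       EAdd (EMul (fst (re_im a)) (snd (re_im b))) (EMul (snd (re_im a)) (fst (re_im b))))
  end.

Fixpoint cdeg (e : cexpr) : Z :=
  match e with
  | CC _ | CChi => 0
  | CX | CY => 1
  | CInvDenom => -2
  | CAdd a b => Z.max (cdeg a) (cdeg b)
  | CMul a b => cdeg a + cdeg b
  end%Z.

Lemma ceval_re_im m chi e x y :
  ceval m chi e x y = (eval m chi (fst (re_im e)) x y, eval m chi (snd (re_im e)) x y).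
Proof.
  induction e as [c| | | | |a IHa b IHb|a IHa b IHb]; simpl; try reflexivity.
  - destruct c; reflexivity.
  - rewrite IHa, IHb. reflexivity.
  - rewrite IHa, IHb. unfold Cmult. simpl. f_equal; ring.
Qed.

Lemma re_im_no_chi_dx e : no_chi_dx (fst (re_im e)) /\ no_chi_dx (snd (re_im e)).
Proof. induction e; simpl; tauto. Qed.

Lemma re_im_deg_le e :
  deg_le (fst (re_im e)) (IZR (cdeg e)) /\ deg_le (snd (re_im e)) (IZR (cdeg e)).
Proof.
  induction e; simpl; try (split; simpl INR; lra).
  - assert (IZR (cdeg e1) <= IZR (Z.max (cdeg e1) (cdeg e2))) by (apply IZR_le; lia).
    assert (IZR (cdeg e2) <= IZR (Z.max (cdeg e1) (cdeg e2))) by (apply IZR_le; lia).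
    destruct IHe1, IHe2. repeat split; eapply deg_le_mono; eauto.
  - rewrite plus_IZR. destruct IHe1, IHe2.
    repeat split; try (exists (IZR (cdeg e1)), (IZR (cdeg e2)); repeat split; auto; lra).
    exists 0, (IZR (cdeg e1) + IZR (cdeg e2)). repeat split; try lra.
    exists (IZR (cdeg e1)), (IZR (cdeg e2)). repeat split; auto; lra.
Qed.

Lemma Cmod_le_re_im z : Cmod z <= Rabs (Re z) + Rabs (Im z).
Proof.
  destruct z as [a b]. unfold Cmod. simpl.
  pose proof (Rabs_pos a). pose proof (Rabs_pos b).
  apply Rsqr_incr_0_var; [|lra].
  rewrite Rsqr_sqrt by (pose proof (Rle_0_sqr a); pose proof (Rle_0_sqr b); unfold Rsqr in *; lra).
  unfold Rsqr. rewrite !Rmult_1_r.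
  rewrite <- (Rabs_pos_eq (a * a)), <- (Rabs_pos_eq (b * b)), !Rabs_mult by apply Rle_0_sqr.
  pose proof (Rmult_le_pos _ _ (Rabs_pos a) (Rabs_pos b)). lra.
Qed.

Section ComplexBounds.

Variables (m : R) (chi : R -> R -> R).
Hypothesis Hm : 0 < m.
Hypothesis Hchi : S2R 0 chi.

Lemma S2_ceval e n : IZR (cdeg e) <= n -> S2 n (ceval m chi e).
Proof.
  intros Hn. destruct (re_im_no_chi_dx e) as [Hre Him], (re_im_deg_le e) as [Dre Dim].
  unfold S2.
  replace (fun x y => Re (ceval m chi e x y)) with (eval m chi (fst (re_im e)))
    by (do 2 (apply functional_extensionality; intro); rewrite ceval_re_im; reflexivity).
  replace (fun x y => Im (ceval m chi e x y)) with (eval m chi (snd (re_im e)))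
    by (do 2 (apply functional_extensionality; intro); rewrite ceval_re_im; reflexivity).
  split; apply S2R_eval; auto.
  - exact (deg_le_mono _ _ _ Dre Hn).
  - exact (deg_le_mono _ _ _ Dim Hn).
Qed.

Lemma S1_ceval e n : IZR (cdeg e) <= n -> S1 n (fun x => ceval m chi e x 0).
Proof.
  intros Hn. destruct (re_im_deg_le e) as [Dre Dim].
  unfold S1.
  replace (fun x => Re (ceval m chi e x 0)) with (fun x => eval m chi (fst (re_im e)) x 0)
    by (apply functional_extensionality; intro; rewrite ceval_re_im; reflexivity).
  replace (fun x => Im (ceval m chi e x 0)) with (fun x => eval m chi (snd (re_im e)) x 0)
    by (apply functional_extensionality; intro; rewrite ceval_re_im; reflexivity).
  split; apply S1R_eval; auto.
  - exact (deg_le_mono _ _ _ Dre Hn).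
  - exact (deg_le_mono _ _ _ Dim Hn).
Qed.

Lemma ceval_order_bound e d : IZR (cdeg e) <= d ->
  exists K, 0 <= K /\ forall x y, Cmod (ceval m chi e x y) <= K * Rpower (jb2 x y) d.
Proof.
  intros Hd. destruct (re_im_deg_le e) as [Hre Him].
  destruct (order_bound_eval m chi Hm Hchi _ d (deg_le_mono _ _ _ Hre Hd)) as (K1 & HK1 & H1).
  destruct (order_bound_eval m chi Hm Hchi _ d (deg_le_mono _ _ _ Him Hd)) as (K2 & HK2 & H2).
  exists (K1 + K2). split; [lra|]. intros x y.
  eapply Rle_trans; [apply Cmod_le_re_im|]. rewrite ceval_re_im. simpl.
  specialize (H1 x y). specialize (H2 x y). lra.
Qed.

End ComplexBounds.

Definition zero_cutoff : R -> R -> R := fun _ _ => 0.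

Lemma Derive_n_zero f n x : (forall t, f t = 0) -> Derive_n f n x = 0.
Proof.
  intros H. revert x. induction n; intros x; simpl; auto.
  rewrite (Derive_ext _ (fun _ => 0)) by auto. apply Derive_const.
Qed.

Lemma ex_derive_n_zero f n x : (forall t, f t = 0) -> ex_derive_n f n x.
Proof.
  intros H. destruct n; simpl; [exact I|].
  apply (ex_derive_ext (fun _ => 0)); [intros; symmetry; apply Derive_n_zero; auto|].
  apply ex_derive_const.
Qed.

Lemma S2R_zero_cutoff : S2R 0 zero_cutoff.
Proof.
  split.
  - intros a1 a2 x y. split; apply ex_derive_n_zero; intros;
      [reflexivity | apply Derive_n_zero; reflexivity].
  - intros a1 a2. exists 0. intros x y. unfold pd.
    rewrite Derive_n_zero, Rabs_R0; [lra|]. intros; apply Derive_n_zero; reflexivity.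
Qed.

(** * Low-high expansions *)

Fixpoint is_poly (e : cexpr) : bool :=
  match e with
  | CInvDenom | CChi => false
  | CAdd a b | CMul a b => is_poly a && is_poly b
  | _ => true
  end.

Fixpoint padd (p q : list cexpr) : list cexpr :=
  match p, q with
  | [], _ => q
  | _, [] => p
  | a :: p', b :: q' => CAdd a b :: padd p' q'
  end.

Fixpoint pmul (p q : list cexpr) : list cexpr :=
  match p with
  | [] => []
  | a :: p' => padd (map (CMul a) q) (CC 0 :: pmul p' q)
  end.

(* The coefficients do not involve y (see [ceval_ycoeffs], which holds for every [t]). *)
Fixpoint ycoeffs (e : cexpr) : list cexpr :=
  match e with
  | CY => [CC 0; CC 1]
  | CAdd a b => padd (ycoeffs a) (ycoeffs b)
  | CMul a b => pmul (ycoeffs a) (ycoeffs b)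
  | _ => [e]
  end.

Definition ycoeff (e : cexpr) (k : nat) : cexpr := nth k (ycoeffs e) (CC 0).

Fixpoint horner (l : list C) (y : C) : C :=
  match l with
  | [] => 0
  | c :: l' => c + y * horner l' y
  end%C.

Section YCoefficients.

Variables (m : R) (chi : R -> R -> R) (x t : R).

Let coeffs (l : list cexpr) : list C := map (fun c => ceval m chi c x t) l.

Lemma horner_padd p q y :
  horner (coeffs (padd p q)) y = (horner (coeffs p) y + horner (coeffs q) y)%C.
Proof.
  revert q; induction p as [|a p IH]; intros [|b q]; simpl; try ring.
  rewrite IH. ring.
Qed.

Lemma horner_pmul p q y :
  horner (coeffs (pmul p q)) y = (horner (coeffs p) y * horner (coeffs q) y)%C.
Proof.
  induction p as [|a p IH]; simpl; [ring|].
  rewrite horner_padd. simpl. rewrite IH.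
  assert (Hscale : forall l,
    horner (coeffs (map (CMul a) l)) y = (ceval m chi a x t * horner (coeffs l) y)%C).
  { induction l as [|b l IHl]; simpl; [ring|]. rewrite IHl. ring. }
  rewrite Hscale. ring.
Qed.

Lemma ceval_ycoeffs e (y : R) : is_poly e = true ->
  ceval m chi e x y = horner (coeffs (ycoeffs e)) y.
Proof.
  induction e as [c| | | | |a IHa b IHb|a IHa b IHb]; simpl; intros He;
    try discriminate; try ring.
  - apply andb_prop in He. rewrite horner_padd, IHa, IHb by tauto. reflexivity.
  - apply andb_prop in He. rewrite horner_pmul, IHa, IHb by tauto. reflexivity.
Qed.

Lemma ceval_ycubic e (y : R) : is_poly e = true -> (length (ycoeffs e) <= 4)%nat ->
  ceval m chi e x y =
  (ceval m chi (ycoeff e 0) x t + ceval m chi (ycoeff e 1) x t * y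
   + ceval m chi (ycoeff e 2) x t * y ^ 2 + ceval m chi (ycoeff e 3) x t * y ^ 3)%C.
Proof.
  intros He Hlen. rewrite ceval_ycoeffs by exact He. unfold ycoeff, coeffs.
  destruct (ycoeffs e) as [|c0 [|c1 [|c2 [|c3 [|c4 l]]]]]; simpl in *; try ring. lia.
Qed.

End YCoefficients.

Lemma RtoC_neq_0 r : r <> 0 -> RtoC r <> 0%C.
Proof. intros H E. apply H. injection E. auto. Qed.

Lemma jb_pos t : 0 < jb t.
Proof. unfold jb. apply sqrt_lt_R0. pose proof (pow2_ge_0 t). lra. Qed.

Lemma jb_le t : jb t <= 1 + Rabs t.
Proof.
  unfold jb. pose proof (Rabs_pos t).
  rewrite <- (sqrt_Rsqr (1 + Rabs t)) by lra. apply sqrt_le_1_alt.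
  rewrite <- (pow2_abs t). unfold Rsqr. nra.
Qed.

Lemma jb_pow_le n t : jb t ^ n <= 2 ^ n * (1 + Rabs t ^ n).
Proof.
  pose proof (Rabs_pos t). pose proof (Rmax_l 1 (Rabs t)). pose proof (Rmax_r 1 (Rabs t)).
  apply Rle_trans with ((2 * Rmax 1 (Rabs t)) ^ n).
  - apply pow_incr. split; [unfold jb; apply sqrt_pos|]. pose proof (jb_le t). lra.
  - rewrite Rpow_mult_distr. apply Rmult_le_compat_l; [apply pow_le; lra|].
    pose proof (pow_le (Rabs t) n H).
    unfold Rmax; destruct (Rle_dec 1 (Rabs t)); [lra|]. rewrite pow1. lra.
Qed.

Lemma remainder_estimate (r1 r0 : C) (x y D c K1 K0 : R) (n : nat) :
  0 <= K1 -> 0 <= K0 -> 0 < c -> y <> 0 -> Rabs x <= Rabs y -> c * (1 + y ^ 2) <= D ->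
  Cmod r1 <= K1 * jb x ^ n -> Cmod r0 <= K0 * jb x ^ S n ->
  Cmod ((r1 * RtoC y + r0) / RtoC D) <= (K1 + 2 * K0) / c * jb x ^ n / Rabs y.
Proof.
  intros HK1 HK0 Hc Hy Hxy HD H1 H0.
  pose proof (Rabs_pos_lt y Hy) as Hay. pose proof (jb_le x) as Hjb.
  assert (HJ : 0 <= jb x ^ n) by (apply pow_le; unfold jb; apply sqrt_pos).
  assert (Hjb0 : 0 <= jb x) by (unfold jb; apply sqrt_pos).
  assert (Hy2 : Rabs y ^ 2 = y ^ 2) by apply pow2_abs.
  assert (Hq : 0 < c * (1 + y ^ 2)) by nra.
  assert (HD0 : 0 < D) by lra.
  set (J := jb x ^ n) in *. set (N := K1 * J * Rabs y + K0 * J * jb x).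
  assert (HN : Cmod (r1 * RtoC y + r0) <= N).
  { eapply Rle_trans; [apply Cmod_triangle|]. rewrite Cmod_mult, Cmod_R.
    unfold N. simpl in H0. fold J in H0.
    apply Rplus_le_compat; [apply Rmult_le_compat_r; auto using Rabs_pos|].
    replace (K0 * J * jb x) with (K0 * (jb x * J)) by ring. exact H0. }
  assert (HNy : N * Rabs y <= (K1 + 2 * K0) * J * (1 + y ^ 2)).
  { assert (jb x * Rabs y <= 2 * (1 + y ^ 2)) by nra.
    assert (K1 * J * (Rabs y * Rabs y) <= K1 * J * (1 + y ^ 2))
      by (apply Rmult_le_compat_l; [apply Rmult_le_pos; auto | nra]).
    assert (K0 * J * (jb x * Rabs y) <= K0 * J * (2 * (1 + y ^ 2)))
      by (apply Rmult_le_compat_l; [apply Rmult_le_pos |]; auto).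
    unfold N. lra. }
  rewrite Cmod_div, Cmod_R, Rabs_pos_eq by (try apply RtoC_neq_0; lra).
  replace ((K1 + 2 * K0) / c * J / Rabs y)
    with ((K1 + 2 * K0) * J * (1 + y ^ 2) / (c * (1 + y ^ 2) * Rabs y)) by (field; nra).
  apply Rle_trans with (N * Rabs y / (c * (1 + y ^ 2) * Rabs y)).
  - replace (N * Rabs y / (c * (1 + y ^ 2) * Rabs y)) with (N / (c * (1 + y ^ 2))) by (field; nra).
    unfold Rdiv. apply Rmult_le_compat; auto using Cmod_ge_0.
    + left; apply Rinv_0_lt_compat; lra.
    + apply Rinv_le_contravar; assumption.
  - unfold Rdiv. apply Rmult_le_compat_r; [|exact HNy].
    left; apply Rinv_0_lt_compat, Rmult_lt_0_compat; assumption.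
Qed.

Lemma RtoC_denom m x y :
  RtoC (denom m x y) = (4 * (x * x + x * y + y * y) + 3 * m)%C.
Proof. unfold denom, RtoC, Cplus, Cmult. simpl. f_equal; ring. Qed.

Section LowHigh.

Variable m : R.
Hypothesis Hm : 0 < m.

(* Division of n3 y^3 + n2 y^2 + n1 y + n0 by denom = 4 y^2 + 4 x y + (4 x^2 + 3 m):
   the quotient is q1 y + q0 and the remainder r1 y + r0. *)
Definition ydiv_quot1 (N : cexpr) : cexpr := CMul (CC (/ 4)) (ycoeff N 3).
Definition ydiv_quot0 (N : cexpr) : cexpr :=
  CMul (CC (/ 4)) (CAdd (ycoeff N 2) (CMul (CC (-1)) (CMul CX (ycoeff N 3)))).
Definition ydiv_rem1 (N : cexpr) : cexpr :=
  CAdd (ycoeff N 1)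
       (CMul (CC (-1)) (CAdd (CMul (ydiv_quot1 N) (CAdd (CMul (CC 4) (CMul CX CX)) (CC (3 * m))))
                             (CMul (CC 4) (CMul CX (ydiv_quot0 N))))).
Definition ydiv_rem0 (N : cexpr) : cexpr :=
  CAdd (ycoeff N 0)
       (CMul (CC (-1)) (CMul (ydiv_quot0 N) (CAdd (CMul (CC 4) (CMul CX CX)) (CC (3 * m))))).

Lemma ydiv_degrees (d : nat) (N : cexpr) :
  (forall k, (k < 4)%nat -> (cdeg (ycoeff N k) <= Z.of_nat (d + 3 - k))%Z) ->
  (cdeg (ydiv_quot1 N) <= Z.of_nat d)%Z /\ (cdeg (ydiv_quot0 N) <= Z.of_nat (S d))%Z /\
  (cdeg (ydiv_rem1 N) <= Z.of_nat (d + 2))%Z /\ (cdeg (ydiv_rem0 N) <= Z.of_nat (S (d + 2)))%Z.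
Proof.
  intros Hdeg.
  pose proof (Hdeg 0%nat ltac:(lia)). pose proof (Hdeg 1%nat ltac:(lia)).
  pose proof (Hdeg 2%nat ltac:(lia)). pose proof (Hdeg 3%nat ltac:(lia)).
  unfold ydiv_rem1, ydiv_rem0, ydiv_quot1, ydiv_quot0. cbn [cdeg]. lia.
Qed.

Lemma ceval_ydiv (N : cexpr) x y :
  is_poly N = true -> (length (ycoeffs N) <= 4)%nat ->
  let ev e := ceval m zero_cutoff e x 0 in
  (ceval m zero_cutoff N x y / RtoC (denom m x y)
   - (ev (ydiv_quot1 N) * RC y + ev (ydiv_quot0 N))
   = (ev (ydiv_rem1 N) * RC y + ev (ydiv_rem0 N)) / RtoC (denom m x y))%C.
Proof.
  intros Hpoly Hlen ev. pose proof (denom_pos m x y Hm).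
  rewrite (ceval_ycubic m zero_cutoff x 0) by assumption.
  unfold ev, ydiv_rem1, ydiv_rem0, ydiv_quot1, ydiv_quot0, RC. cbn [ceval].
  rewrite RtoC_denom. field. rewrite <- RtoC_denom. apply RtoC_neq_0. lra.
Qed.

Lemma low_high_expansion (d : nat) (N : cexpr) (F : R -> R -> C) :
  is_poly N = true -> (length (ycoeffs N) <= 4)%nat ->
  (forall k, (k < 4)%nat -> (cdeg (ycoeff N k) <= Z.of_nat (d + 3 - k))%Z) ->
  (forall x y, F x y = ceval m zero_cutoff N x y / RtoC (denom m x y))%C ->
  exists (f0 f1 : R -> C) (K : R), S1 (INR d) f0 /\ S1 (INR (S d)) f1 /\
    forall x y, y <> 0 -> Rabs x <= Rabs y ->
      Cmod (F x y - (f0 x * RC y + f1 x)) <= K * (1 + Rabs x ^ (d + 2)) / Rabs y.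
Proof.
  intros Hpoly Hlen Hdeg HF.
  assert (Deg : forall e k, (cdeg e <= Z.of_nat k)%Z -> IZR (cdeg e) <= INR k).
  { intros e k Hk. rewrite INR_IZR_INZ. apply IZR_le, Hk. }
  destruct (ydiv_degrees d N Hdeg) as (Dq1 & Dq0 & Dr1 & Dr0).
  destruct (ceval_order_bound m zero_cutoff Hm S2R_zero_cutoff _ _ (Deg _ _ Dr1))
    as (K1 & HK1 & B1).
  destruct (ceval_order_bound m zero_cutoff Hm S2R_zero_cutoff _ _ (Deg _ _ Dr0))
    as (K0 & HK0 & B0).
  pose (c := Rmin 2 (3 * m)). assert (Hc : 0 < c) by (apply Rmin_glb_lt; lra).
  exists (fun x => ceval m zero_cutoff (ydiv_quot1 N) x 0),
    (fun x => ceval m zero_cutoff (ydiv_quot0 N) x 0), ((K1 + 2 * K0) / c * 2 ^ (d + 2)).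
  split; [|split]; [apply S1_ceval; auto using S2R_zero_cutoff..|].
  intros x y Hy Hxy. rewrite HF, ceval_ydiv by assumption.
  eapply Rle_trans.
  - apply (remainder_estimate _ _ x y (denom m x y) c K1 K0 (d + 2)); auto.
    + pose proof (denom_lower_bound m x y Hm) as Hlow. pose proof (pow2_ge_0 x).
      fold c in Hlow. nra.
    + specialize (B1 x 0). rewrite jb2_0, Rpower_pow in B1 by apply jb_pos. exact B1.
    + specialize (B0 x 0). rewrite jb2_0, Rpower_pow in B0 by apply jb_pos. exact B0.
  - unfold Rdiv. apply Rmult_le_compat_r; [left; apply Rinv_0_lt_compat, Rabs_pos_lt, Hy|].
    rewrite (Rmult_assoc ((K1 + 2 * K0) * / c)). apply Rmult_le_compat_l; [|apply jb_pow_le].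
    apply Rmult_le_pos; [lra | left; apply Rinv_0_lt_compat, Hc].
Qed.

Lemma low_high_expansion_div (d : nat) (N : cexpr) (F : R -> R -> C) :
  is_poly N = true -> (length (ycoeffs N) <= 4)%nat ->
  (forall k, (k < 4)%nat -> (cdeg (ycoeff N k) <= Z.of_nat (d + 3 - k))%Z) ->
  (forall x y, y <> 0 ->
     F x y = ceval m zero_cutoff N x y / (RtoC (denom m x y) * RtoC y))%C ->
  exists (f0 f1 : R -> C) (K : R), S1 (INR d) f0 /\ S1 (INR (S d)) f1 /\
    forall x y, y <> 0 -> Rabs x <= Rabs y ->
      Cmod (F x y - (f0 x + f1 x / RC y)) <= K * (1 + Rabs x ^ (d + 2)) / y ^ 2.
Proof.
  intros Hpoly Hlen Hdeg HF.
  destruct (low_high_expansion d N (fun x y => ceval m zero_cutoff N x y / RtoC (denom m x y))%C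
              Hpoly Hlen Hdeg (fun x y => eq_refl)) as (f0 & f1 & K & H0 & H1 & HK).
  exists f0, f1, K. split; [exact H0|]. split; [exact H1|]. intros x y Hy Hxy.
  pose proof (denom_pos m x y Hm). pose proof (Rabs_pos_lt y Hy).
  assert (HF' : (F x y - (f0 x + f1 x / RC y)
                 = (ceval m zero_cutoff N x y / RtoC (denom m x y) - (f0 x * RC y + f1 x))
                   / RC y)%C).
  { rewrite HF by exact Hy. unfold RC. field.
    split; apply RtoC_neq_0; lra. }
  rewrite HF', Cmod_div, Cmod_R by (apply RtoC_neq_0, Hy).
  rewrite <- pow2_abs. simpl pow at 2. rewrite Rmult_1_r.
  replace (K * (1 + Rabs x ^ (d + 2)) / (Rabs y * Rabs y))
    with (K * (1 + Rabs x ^ (d + 2)) / Rabs y / Rabs y) by (field; lra).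
  unfold Rdiv. apply Rmult_le_compat_r; [left; apply Rinv_0_lt_compat; lra|]. apply HK; auto.
Qed.

End LowHigh.

Lemma hh_decomp_of_split m (k : Z) (chi : R -> R -> R) (F : symbol) (quot rem : cexpr) :
  0 < m -> hh_cutoff chi -> (cdeg quot <= k)%Z -> (cdeg rem <= k)%Z ->
  (forall x y, F x y = RC (x + y) * ceval m chi quot x y + ceval m chi rem x y)%C ->
  hh_decomp (IZR k) chi F.
Proof.
  intros Hm [Hchi _] Hq Hr HF.
  exists (ceval m chi (CMul CChi quot)), (ceval m chi (CMul CChi rem)).
  split; [|split]; try (apply S2_ceval; auto; apply IZR_le; simpl; lia).
  intros x y. rewrite HF. simpl. unfold RC. ring.
Qed.

(** * The normal form system *)

Ltac fold_RtoC :=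
  repeat (rewrite <- RtoC_plus || rewrite <- RtoC_minus || rewrite <- RtoC_mult
          || rewrite <- RtoC_opp).

Definition sigma (m x y : R) : C := RC (2 * x * y - m).

Definition asol (m : R) (q00 q11 : symbol) : symbol := fun x y =>
  ((q11 x y * sigma m x y - 2 * w m x * w m y * q00 x y) / RC (m * denom m x y))%C.

Definition bsol (m : R) (q00 q11 : symbol) : symbol := fun x y =>
  ((q00 x y * sigma m x y - 2 * q11 x y) / RC (m * denom m x y))%C.

Definition csol (m : R) (q01 : symbol) : symbol := fun x y =>
  ((sigma m x y * q01 x y + 2 * w m y * q01 y x) / RC (m * denom m x y))%C.

Lemma sigma_sym m x y : sigma m y x = sigma m x y.
Proof. unfold sigma. f_equal. ring. Qed.

(* sigma is the symbol of L_KG on a product minus its symbols on the two factors *)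
Lemma sigma_eq m x y : (RC (x + y) * RC (x + y) + RC m - w m x - w m y)%C = sigma m x y.
Proof.
  unfold sigma, w, RC. fold_RtoC. f_equal. ring.
Qed.

Lemma mdenom_eq m x y :
  RC (m * denom m x y) = (4 * w m x * w m y - sigma m x y * sigma m x y)%C.
Proof.
  unfold sigma, w, denom, RC. fold_RtoC. f_equal. ring.
Qed.

Lemma mdenom_neq_0 m x y : 0 < m -> RC (m * denom m x y) <> 0%C.
Proof. intros Hm. apply RtoC_neq_0. pose proof (denom_pos m x y Hm). nra. Qed.

Lemma Ci_sq (z A : C) : (Ci * z * (Ci * z * A) = - (z * z * A))%C.
Proof. unfold Ci, Cmult, Copp. simpl. f_equal; ring. Qed.

Lemma RC_m1 : RC (-1) = (- (1))%C.
Proof. unfold RC. rewrite <- RtoC_opp. reflexivity. Qed.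

Lemma Lambda2_uu m a b c x y :
  q_uu (qopp (Lambda2_LKG m (nf_corr a b c))) x y
  = (- (sigma m x y * a x y + 2 * w m x * w m y * b x y))%C.
Proof.
  simpl. rewrite Ci_sq, RC_m1, <- sigma_eq. ring.
Qed.

Lemma Lambda2_tt m a b c x y :
  q_tt (qopp (Lambda2_LKG m (nf_corr a b c))) x y
  = (- (2 * a x y + sigma m x y * b x y))%C.
Proof. simpl. rewrite Ci_sq, RC_m1, <- sigma_eq. ring. Qed.

Lemma Lambda2_mixed m a b c x y :
  (q_tu (qopp (Lambda2_LKG m (nf_corr a b c))) x y
   + q_ut (qopp (Lambda2_LKG m (nf_corr a b c))) y x)%C
  = (- (sigma m x y * c x y) + 2 * w m y * c y x)%C.
Proof.
  simpl. unfold zero_symbol. rewrite !Ci_sq, RC_m1, <- sigma_eq.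
  unfold RC. ring.
Qed.

Definition nf_system (m : R) (q00 q01 q11 a b c : symbol) : Prop :=
  forall x y,
    (sigma m x y * a x y + 2 * w m x * w m y * b x y = - q11 x y)%C /\
    (2 * a x y + sigma m x y * b x y = - q00 x y)%C /\
    (- (sigma m x y * c x y) + 2 * w m y * c y x = q01 x y)%C.

Lemma Cplus_half (u v : C) : (u + u = v + v)%C -> u = v.
Proof.
  intros H. replace u with (/ 2 * (u + u))%C by field.
  rewrite H. field.
Qed.

Lemma nf_equation_iff_system m q00 q01 q11 a b c :
  symmetric_symbol q00 -> symmetric_symbol q11 -> symmetric_symbol a -> symmetric_symbol b ->
  nf_equation m q00 q01 q11 a b c <-> nf_system m q00 q01 q11 a b c.
Proof.
  intros S00 S11 Sa Sb. unfold nf_equation, qequiv, nf_system.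
  assert (Euu : forall x y, (sigma m y x * a y x + 2 * w m y * w m x * b y x
                             = sigma m x y * a x y + 2 * w m x * w m y * b x y)%C)
    by (intros x y; rewrite sigma_sym, (Sa y x), (Sb y x); ring).
  assert (Ett : forall x y, (2 * a y x + sigma m y x * b y x
                             = 2 * a x y + sigma m x y * b x y)%C)
    by (intros x y; rewrite sigma_sym, (Sa y x), (Sb y x); ring).
  split; intros H x y; destruct (H x y) as (Huu & Htt & Hmix).
  - rewrite !Lambda2_uu, (Euu x y) in Huu. rewrite !Lambda2_tt, (Ett x y) in Htt.
    rewrite Lambda2_mixed in Hmix. cbn [nonlin q_uu q_tt q_tu q_ut] in *.
    rewrite (S11 y x) in Huu. rewrite (S00 y x) in Htt. unfold zero_symbol, RC in Hmix.
    apply Cplus_half in Huu. apply Cplus_half in Htt.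
    repeat split.
    + rewrite <- Huu. ring.
    + rewrite <- Htt. ring.
    + rewrite Hmix. ring.
  - rewrite !Lambda2_uu, !Lambda2_tt, Lambda2_mixed, (Euu x y), (Ett x y), Huu, Htt, Hmix.
    cbn [nonlin q_uu q_tt q_tu q_ut]. unfold zero_symbol, RC.
    rewrite (S11 y x), (S00 y x). repeat split; ring.
Qed.

Lemma nf_system_solution m q00 q01 q11 :
  0 < m -> nf_system m q00 q01 q11 (asol m q00 q11) (bsol m q00 q11) (csol m q01).
Proof.
  intros Hm x y. pose proof (mdenom_neq_0 m x y Hm) as Hd.
  unfold asol, bsol, csol. rewrite (sigma_sym m x y), (denom_sym m x y).
  rewrite mdenom_eq in *. repeat split; field; exact Hd.
Qed.

Lemma nf_system_unique m q00 q01 q11 a b c : 0 < m ->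
  nf_system m q00 q01 q11 a b c ->
  a = asol m q00 q11 /\ b = bsol m q00 q11 /\ c = csol m q01.
Proof.
  intros Hm H.
  split; [|split]; apply functional_extensionality; intro x;
    apply functional_extensionality; intro y;
    pose proof (mdenom_neq_0 m x y Hm) as Hd; rewrite mdenom_eq in Hd;
    unfold asol, bsol, csol; rewrite mdenom_eq;
    destruct (H x y) as (E1 & E2 & E3).
  - replace (q11 x y) with (- (sigma m x y * a x y + 2 * w m x * w m y * b x y))%C
      by (rewrite E1; ring).
    replace (q00 x y) with (- (2 * a x y + sigma m x y * b x y))%C by (rewrite E2; ring).
    field. exact Hd.
  - replace (q11 x y) with (- (sigma m x y * a x y + 2 * w m x * w m y * b x y))%C
      by (rewrite E1; ring).
    replace (q00 x y) with (- (2 * a x y + sigma m x y * b x y))%C by (rewrite E2; ring).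
    field. exact Hd.
  - destruct (H y x) as (_ & _ & E3'). rewrite <- E3, <- E3', (sigma_sym m x y).
    field. exact Hd.
Qed.

Lemma Cconj_RC r : Cconj (RC r) = RC r.
Proof. unfold Cconj, RC, RtoC. simpl. f_equal. ring. Qed.

Lemma Cconj_minus (u v : C) : Cconj (u - v) = (Cconj u - Cconj v)%C.
Proof. destruct u, v. unfold Cconj, Cminus, Cplus, Copp. simpl. f_equal. ring. Qed.

Lemma sigma_even m x y : sigma m (- x) (- y) = sigma m x y.
Proof. unfold sigma. f_equal. ring. Qed.

Lemma w_even m x : w m (- x) = w m x.
Proof. unfold w. f_equal. ring. Qed.

Lemma denom_even m x y : denom m (- x) (- y) = denom m x y.
Proof. unfold denom. ring. Qed.

Lemma nf_solution_admissible m q00 q01 q11 : 0 < m ->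
  symmetric_symbol q00 -> symmetric_symbol q11 ->
  real_symbol q00 -> real_symbol q01 -> real_symbol q11 ->
  nf_admissible (asol m q00 q11) (bsol m q00 q11) (csol m q01).
Proof.
  intros Hm S00 S11 R00 R01 R11.
  repeat split; intros x y.
  - unfold asol. rewrite R11, R00, sigma_even, !w_even, denom_even,
      Cdiv_conj by apply mdenom_neq_0, Hm.
    unfold w, sigma. rewrite Cconj_minus, !Cmult_conj, !Cconj_RC. reflexivity.
  - unfold bsol. rewrite R11, R00, sigma_even, denom_even, Cdiv_conj by apply mdenom_neq_0, Hm.
    unfold sigma. rewrite Cconj_minus, !Cmult_conj, !Cconj_RC. reflexivity.
  - unfold csol. rewrite !R01, sigma_even, !w_even, denom_even,
      Cdiv_conj by apply mdenom_neq_0, Hm.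
    unfold w, sigma. rewrite Cplus_conj, !Cmult_conj, !Cconj_RC. reflexivity.
  - unfold asol. rewrite (S11 x y), (S00 x y), (sigma_sym m x y), (denom_sym m x y).
    f_equal. ring.
  - unfold bsol. rewrite (S11 x y), (S00 x y), (sigma_sym m x y), (denom_sym m x y). reflexivity.
Qed.

Ltac push_RtoC :=
  repeat (rewrite RtoC_plus || rewrite RtoC_minus || rewrite RtoC_mult
          || rewrite RtoC_opp || rewrite RtoC_pow).

Ltac check_cdeg := apply Z.leb_le; vm_compute; reflexivity.

Ltac check_ycubic :=
  first
    [ reflexivity
    | apply Nat.leb_le; vm_compute; reflexivity
    | intros [|[|[|[|k]]]] Hk; [..|lia]; apply Z.leb_le; vm_compute; reflexivity ].

Local Infix "+." := CAdd (at level 50, left associativity).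
Local Infix "*." := CMul (at level 40, left associativity).
Local Notation "a -. b" := (CAdd a (CMul (CC (- (1))) b)) (at level 50, left associativity).

Section SpanSymbols.

Variables (m : R) (p1 p2 r1 r2 r3 r4 r5 s1 s2 s3 s4 s5 : C).

Definition q00_expr (X Y : cexpr) : cexpr := CC p1 +. CC (p2 * Ci) *. (X +. Y).

Definition q11_low (X Y : cexpr) : cexpr :=
  CC s1 +. CC (s2 * Ci) *. (X +. Y) +. CC s3 *. (X *. Y) +. CC s4 *. (X *. X +. Y *. Y).
Definition q11_top (X Y : cexpr) : cexpr := CC (s5 * Ci) *. (X *. Y *. (X +. Y)).
Definition q11_expr (X Y : cexpr) : cexpr := q11_low X Y +. q11_top X Y.

Definition q01_low (X Y : cexpr) : cexpr := CC r1 +. CC (r2 * Ci) *. X +. CC (r3 * Ci) *. Y.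
Definition q01_top (X Y : cexpr) : cexpr := CC r4 *. (X *. Y) +. CC r5 *. (Y *. Y).
Definition q01_expr (X Y : cexpr) : cexpr := q01_low X Y +. q01_top X Y.

Definition sigma_expr (X Y : cexpr) : cexpr := CC 2 *. X *. Y -. CC m.
Definition w_expr (X : cexpr) : cexpr := X *. X +. CC m.

Definition num_a : cexpr :=
  CC (/ m) *. (q11_expr CX CY *. sigma_expr CX CY
               -. CC 2 *. w_expr CX *. w_expr CY *. q00_expr CX CY).
Definition num_b : cexpr :=
  CC (/ m) *. (q00_expr CX CY *. sigma_expr CX CY -. CC 2 *. q11_expr CX CY).
Definition num_c (X Y : cexpr) : cexpr :=
  CC (/ m) *. (sigma_expr X Y *. q01_expr X Y +. CC 2 *. w_expr Y *. q01_expr Y X).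

(* The top-order part of each numerator is a multiple of x + y: [quot_*] is the quotient,
   [rem_*] collects the lower-order terms. *)
Definition quot_a : cexpr := CC (2 * Ci * (s5 - p2) / m) *. (CX *. CX *. CY *. CY) *. CInvDenom.
Definition rem_a : cexpr :=
  CC (/ m) *. (q11_low CX CY *. sigma_expr CX CY -. CC m *. q11_top CX CY
               -. CC (2 * p1) *. (CX *. CX *. CY *. CY)
               -. CC (2 * m) *. (CX *. CX +. CY *. CY +. CC m) *. q00_expr CX CY) *. CInvDenom.

Definition quot_b : cexpr := CC (2 * Ci * (p2 - s5) / m) *. (CX *. CY) *. CInvDenom.
Definition rem_b : cexpr :=
  CC (/ m) *. (CC p1 *. sigma_expr CX CY -. CC (m * p2 * Ci) *. (CX +. CY)
               -. CC 2 *. q11_low CX CY) *. CInvDenom.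

Definition quot_c : cexpr := CC (2 * (r4 + r5) / m) *. (CX *. CY *. CY) *. CInvDenom.
Definition rem_c : cexpr :=
  CC (/ m) *. (sigma_expr CX CY *. q01_low CX CY -. CC m *. q01_top CX CY
               +. CC 2 *. (CY *. CY) *. q01_low CY CX +. CC (2 * m) *. q01_expr CY CX) *. CInvDenom.

Hypothesis Hm : 0 < m.
Variables (q00 q01 q11 : symbol).
Hypothesis Hq00 : forall x y, q00 x y = (p1 + p2 * (Ci * RC (x + y)))%C.
Hypothesis Hq01 : forall x y, q01 x y = (r1 + r2 * (Ci * RC x) + r3 * (Ci * RC y)
                                         + r4 * RC (x * y) + r5 * RC (y ^ 2))%C.
Hypothesis Hq11 : forall x y, q11 x y = (s1 + s2 * (Ci * RC (x + y)) + s3 * RC (x * y)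
             + s4 * RC (x ^ 2 + y ^ 2) + s5 * (Ci * RC (x ^ 2 * y + x * y ^ 2)))%C.

Section Evaluation.

Variables (chi : R -> R -> R) (X Y : cexpr) (x y u v : R).
Hypothesis HX : ceval m chi X x y = RtoC u.
Hypothesis HY : ceval m chi Y x y = RtoC v.

Lemma ceval_q00_expr : ceval m chi (q00_expr X Y) x y = q00 u v.
Proof. unfold q00_expr. cbn [ceval]. rewrite HX, HY, Hq00. unfold RC. push_RtoC. ring. Qed.

Lemma ceval_q11_expr : ceval m chi (q11_expr X Y) x y = q11 u v.
Proof.
  unfold q11_expr, q11_low, q11_top. cbn [ceval]. rewrite HX, HY, Hq11. unfold RC.
  push_RtoC. ring.
Qed.

Lemma ceval_q01_expr : ceval m chi (q01_expr X Y) x y = q01 u v.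
Proof.
  unfold q01_expr, q01_low, q01_top. cbn [ceval]. rewrite HX, HY, Hq01. unfold RC.
  push_RtoC. ring.
Qed.

Lemma ceval_sigma_expr : ceval m chi (sigma_expr X Y) x y = sigma m u v.
Proof. unfold sigma_expr, sigma, RC. cbn [ceval]. rewrite HX, HY. push_RtoC. ring. Qed.

Lemma ceval_w_expr : ceval m chi (w_expr X) x y = w m u.
Proof. unfold w_expr, w, RC. cbn [ceval]. rewrite HX. push_RtoC. ring. Qed.

End Evaluation.

Lemma asol_quotient x y :
  asol m q00 q11 x y = (ceval m zero_cutoff num_a x y / RtoC (denom m x y))%C.
Proof.
  pose proof (denom_pos m x y Hm). unfold asol, num_a. cbn [ceval].
  rewrite (ceval_q11_expr _ _ _ x y x y), (ceval_q00_expr _ _ _ x y x y),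
    (ceval_sigma_expr _ _ _ x y x y), (ceval_w_expr _ _ x y x), (ceval_w_expr _ _ x y y)
    by reflexivity.
  unfold RC. rewrite RtoC_mult. field. split; apply RtoC_neq_0; lra.
Qed.

Lemma bsol_quotient x y : y <> 0 ->
  bsol m q00 q11 x y = (ceval m zero_cutoff (num_b *. CY) x y / (RtoC (denom m x y) * RtoC y))%C.
Proof.
  intros Hy. pose proof (denom_pos m x y Hm). unfold bsol, num_b. cbn [ceval].
  rewrite (ceval_q11_expr _ _ _ x y x y), (ceval_q00_expr _ _ _ x y x y),
    (ceval_sigma_expr _ _ _ x y x y) by reflexivity.
  unfold RC. rewrite RtoC_mult. field. repeat split; apply RtoC_neq_0; lra.
Qed.

Lemma csol_quotient x y :
  csol m q01 x y = (ceval m zero_cutoff (num_c CX CY) x y / RtoC (denom m x y))%C.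
Proof.
  pose proof (denom_pos m x y Hm). unfold csol, num_c. cbn [ceval].
  rewrite (ceval_q01_expr _ _ _ x y x y), (ceval_q01_expr _ _ _ x y y x),
    (ceval_sigma_expr _ _ _ x y x y), (ceval_w_expr _ _ x y y) by reflexivity.
  unfold RC. rewrite RtoC_mult. field. split; apply RtoC_neq_0; lra.
Qed.

Lemma csol_quotient_swap x y : x <> 0 ->
  csol m q01 x y
  = (ceval m zero_cutoff (num_c CY CX *. CY) y x / (RtoC (denom m y x) * RtoC x))%C.
Proof.
  intros Hx. pose proof (denom_pos m x y Hm). rewrite denom_sym. unfold csol, num_c. cbn [ceval].
  rewrite (ceval_q01_expr _ _ _ y x x y), (ceval_q01_expr _ _ _ y x y x),
    (ceval_sigma_expr _ _ _ y x x y), (ceval_w_expr _ _ y x y) by reflexivity.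
  unfold RC. rewrite RtoC_mult. field. repeat split; apply RtoC_neq_0; lra.
Qed.

Lemma low_high_expansions : exists c0 : R, 0 < c0 /\
  (exists (a0 a1 : R -> C) (K : R), S1 2 a0 /\ S1 3 a1 /\
     forall x y, y <> 0 -> Rabs x <= c0 * Rabs y ->
       Cmod (asol m q00 q11 x y - (a0 x * RC y + a1 x))%C <= K * (1 + Rabs x ^ 4) / Rabs y) /\
  (exists (b0 b1 : R -> C) (K : R), S1 1 b0 /\ S1 2 b1 /\
     forall x y, y <> 0 -> Rabs x <= c0 * Rabs y ->
       Cmod (bsol m q00 q11 x y - (b0 x + b1 x / RC y))%C <= K * (1 + Rabs x ^ 3) / y ^ 2) /\
  (exists (c10 c11 : R -> C) (K : R), S1 1 c10 /\ S1 2 c11 /\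
     forall x y, y <> 0 -> Rabs x <= c0 * Rabs y ->
       Cmod (csol m q01 x y - (c10 x * RC y + c11 x))%C <= K * (1 + Rabs x ^ 3) / Rabs y) /\
  (exists (c20 c21 : R -> C) (K : R), S1 2 c20 /\ S1 3 c21 /\
     forall x y, x <> 0 -> Rabs y <= c0 * Rabs x ->
       Cmod (csol m q01 x y - (c20 y + c21 y / RC x))%C <= K * (1 + Rabs y ^ 4) / x ^ 2).
Proof.
  exists 1. split; [lra|].
  split; [|split; [|split]].
  - destruct (low_high_expansion m Hm 2 num_a (asol m q00 q11))
      as (a0 & a1 & K & H0 & H1 & HK); try check_ycubic; [exact asol_quotient|].
    rewrite INR_IZR_INZ in H0, H1. exists a0, a1, K.
    split; [exact H0 | split; [exact H1 | intros x y Hy Hxy; apply HK; lra]].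
  - destruct (low_high_expansion_div m Hm 1 (num_b *. CY) (bsol m q00 q11))
      as (b0 & b1 & K & H0 & H1 & HK); try check_ycubic; [exact bsol_quotient|].
    rewrite INR_IZR_INZ in H0, H1. exists b0, b1, K.
    split; [exact H0 | split; [exact H1 | intros x y Hy Hxy; apply HK; lra]].
  - destruct (low_high_expansion m Hm 1 (num_c CX CY) (csol m q01))
      as (c0 & c1 & K & H0 & H1 & HK); try check_ycubic; [exact csol_quotient|].
    rewrite INR_IZR_INZ in H0, H1. exists c0, c1, K.
    split; [exact H0 | split; [exact H1 | intros x y Hy Hxy; apply HK; lra]].
  - destruct (low_high_expansion_div m Hm 2 (num_c CY CX *. CY) (fun y x => csol m q01 x y))
      as (c0 & c1 & K & H0 & H1 & HK); try check_ycubic; [intros y x; apply csol_quotient_swap|].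
    rewrite INR_IZR_INZ in H0, H1. exists c0, c1, K.
    split; [exact H0 | split; [exact H1 | intros x y Hx Hyx; apply (HK y x); lra]].
Qed.

Lemma hh_decompositions chi : hh_cutoff chi ->
  hh_decomp 2 chi (asol m q00 q11) /\ hh_decomp 0 chi (bsol m q00 q11) /\
  hh_decomp 1 chi (csol m q01).
Proof.
  intros Hchi. split; [|split].
  - apply (hh_decomp_of_split m 2 chi _ quot_a rem_a Hm Hchi); try check_cdeg.
    intros x y. pose proof (denom_pos m x y Hm).
    unfold asol, quot_a, rem_a, q11_low, q11_top, q00_expr, sigma_expr. cbn [ceval].
    rewrite Hq00, Hq11. unfold sigma, w, RC. rewrite RtoC_inv by lra. push_RtoC.
    field. split; apply RtoC_neq_0; lra.
  - apply (hh_decomp_of_split m 0 chi _ quot_b rem_b Hm Hchi); try check_cdeg.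
    intros x y. pose proof (denom_pos m x y Hm).
    unfold bsol, quot_b, rem_b, q11_low, sigma_expr. cbn [ceval].
    rewrite Hq00, Hq11. unfold sigma, RC. rewrite RtoC_inv by lra. push_RtoC.
    field. split; apply RtoC_neq_0; lra.
  - apply (hh_decomp_of_split m 1 chi _ quot_c rem_c Hm Hchi); try check_cdeg.
    intros x y. pose proof (denom_pos m x y Hm).
    unfold csol, quot_c, rem_c, q01_expr, q01_low, q01_top, sigma_expr. cbn [ceval].
    rewrite !Hq01. unfold sigma, w, RC. rewrite RtoC_inv by lra. push_RtoC.
    field. split; apply RtoC_neq_0; lra.
Qed.

End SpanSymbols.

Theorem proposition3p1 (m : R) (q00 q01 q11 : R -> R -> C) :
  0 < m ->
  in_span_q00 q00 -> in_span_q01 q01 -> in_span_q11 q11 ->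
  symmetric_symbol q00 -> symmetric_symbol q11 ->
  real_symbol q00 -> real_symbol q01 -> real_symbol q11 ->
  exists a b c : R -> R -> C,
    (* existence and uniqueness of the normal form transformation *)
    (nf_admissible a b c /\ nf_equation m q00 q01 q11 a b c /\
     (forall a' b' c' : R -> R -> C,
        nf_admissible a' b' c' -> nf_equation m q00 q01 q11 a' b' c' ->
        a' = a /\ b' = b /\ c' = c)) /\
    (* (i) low-high and high-low expansions *)
    (exists c0 : R, 0 < c0 /\
      (exists (a0 a1 : R -> C) (K : R), S1 2 a0 /\ S1 3 a1 /\
         forall x y, y <> 0 -> Rabs x <= c0 * Rabs y ->
           Cmod (a x y - (a0 x * RC y + a1 x))%C
             <= K * (1 + Rabs x ^ 4) / Rabs y) /\
      (exists (b0 b1 : R -> C) (K : R), S1 1 b0 /\ S1 2 b1 /\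
         forall x y, y <> 0 -> Rabs x <= c0 * Rabs y ->
           Cmod (b x y - (b0 x + b1 x / RC y))%C
             <= K * (1 + Rabs x ^ 3) / y ^ 2) /\
      (exists (c10 c11 : R -> C) (K : R), S1 1 c10 /\ S1 2 c11 /\
         forall x y, y <> 0 -> Rabs x <= c0 * Rabs y ->
           Cmod (c x y - (c10 x * RC y + c11 x))%C
             <= K * (1 + Rabs x ^ 3) / Rabs y) /\
      (exists (c20 c21 : R -> C) (K : R), S1 2 c20 /\ S1 3 c21 /\
         forall x y, x <> 0 -> Rabs y <= c0 * Rabs x ->
           Cmod (c x y - (c20 y + c21 y / RC x))%C
             <= K * (1 + Rabs y ^ 4) / x ^ 2)) /\
    (* (ii) high-high decompositions *)
    (forall chi : R -> R -> R, hh_cutoff chi ->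
       hh_decomp 2 chi a /\ hh_decomp 0 chi b /\ hh_decomp 1 chi c).
Proof.
  intros Hm [p1 [p2 Hq00]] [r1 [r2 [r3 [r4 [r5 Hq01]]]]] [s1 [s2 [s3 [s4 [s5 Hq11]]]]]
    S00 S11 R00 R01 R11.
  exists (asol m q00 q11), (bsol m q00 q11), (csol m q01).
  pose proof (nf_solution_admissible m q00 q01 q11 Hm S00 S11 R00 R01 R11) as Hadm.
  split; [split; [exact Hadm | split] | split].
  - destruct Hadm as (_ & _ & _ & Sa & Sb).
    apply nf_equation_iff_system; auto. apply nf_system_solution, Hm.
  - intros a b c (_ & _ & _ & Sa & Sb) Heq.
    apply nf_system_unique; auto. apply (nf_equation_iff_system m q00 q01 q11); auto.
  - eapply low_high_expansions; eassumption.
  - intros chi Hchi. eapply hh_decompositions; eassumption.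
Qed.
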